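(* Let $r\ge 2$ be an integer, let $d_0,\dots,d_{r-1}>0$ with $\sum_{l=0}^{r-1} d_l=1$, let $p>0$ and $C_\alpha>0$ be constants, and let $n_1,n_2,m$ be integers with $n_2>n_1\ge 1$ and $m>n_1$. Suppose that, as $\Delta x\to 0^+$, quantities $\tau=\tau(\Delta x)\ge 0$ and $\beta_k=\beta_k(\Delta x)>0$ ($k=0,\dots,r-1$) satisfy $\tau=O(\Delta x^m)$ and $$\beta_k=\sum_{l'=n_1}^{n_2-1} a_{l'}\,\Delta x^{l'}+b_k\,\Delta x^{n_2}+O(\Delta x^{n_2+1}),\qquad k=0,\dots,r-1,$$ where the coefficients $a_{n_1},\dots,a_{n_2-1}$ are the same for all $k$, $a_{n_1}\neq 0$, and the constants $b_k$ may differ across $k$. Define $\alpha_k=d_k\bigl(1+C_\alpha(\tau/\beta_k)^p\bigr)$ (with the same constant $C_\alpha$ for every $k$) and $\omega_k=\alpha_k/\sum_{l=0}^{r-1}\alpha_l$. Then for every $k$, $$\omega_k=d_k\Bigl(1+O\bigl(\Delta x^{p(m-n_1)}\bigr)\cdot O\bigl(\Delta x^{n_2-n_1}\bigr)\Bigr)=d_k\Bigl(1+O\bigl(\Delta x^{p(m-n_1)+n_2-n_1}\bigr)\Bigr)\quad\text{as }\Delta x\to 0^+.$$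
   Context: In a WENO-Z type scheme, $d_k$ are linear weights, $\beta_k$ are local smoothness indicators, $\tau$ is a global smoothness indicator, $\alpha_k$ are non-normalized nonlinear weights and $\omega_k$ are normalized nonlinear weights. All $O(\cdot)$ statements refer to the limit $\Delta x\to 0^+$ with all other data fixed. *)

From Stdlib Require Import Reals Lra.
Open Scope R_scope.

Definition bigO0 (f g : R -> R) : Prop :=
  exists C delta : R, 0 < delta /\
    forall h : R, 0 < h < delta -> Rabs (f h) <= C * Rabs (g h).

(* Sum_{l=0}^{r-1} F l  (r >= 1). *)
Definition sum_lt (r : nat) (F : nat -> R) : R := sum_f_R0 F (r - 1).

(* Real power x^p for x >= 0, p > 0, with the convention 0^p = 0
   (Stdlib's Rpower 0 p is exp (p * ln 0) = 1, which is wrong here). *)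
Definition rpow (x p : R) : R := if Rle_dec x 0 then 0 else Rpower x p.

Definition alphaZ (d : nat -> R) (Ca p : R) (tau : R -> R) (beta : nat -> R -> R)
    (k : nat) (h : R) : R :=
  d k * (1 + Ca * rpow (tau h / beta k h) p).

Definition omegaZ (r : nat) (d : nat -> R) (Ca p : R) (tau : R -> R)
    (beta : nat -> R -> R) (k : nat) (h : R) : R :=
  alphaZ d Ca p tau beta k h / sum_lt r (fun l => alphaZ d Ca p tau beta l h).

From Stdlib Require Import Reals Lra Lia.
Open Scope R_scope.

(** All [β_k] share the expansion [a_{n1} Δx^{n1} + ...] up to order [n2 - 1]; as
    [β_k > 0], this forces [a_{n1} > 0], so [β_k >= (a_{n1}/2) Δx^{n1}] near [0] and
    [β_k/β_l - 1 = O(Δx^{n2-n1})].  Hence [(τ/β_k)^p = O(Δx^{p(m-n1)})], and the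
    elementary bound [|x^p - y^p| <= p (x^p + y^p) (|x/y - 1| + |y/x - 1|)] makes every
    difference [(τ/β_k)^p - (τ/β_l)^p] of order [Δx^{p(m-n1)+n2-n1}].  Finally, since
    [Σ d_l = 1], [ω_k/d_k - 1 = C_α Σ_l d_l ((τ/β_k)^p - (τ/β_l)^p) / Σ_l α_l] with
    [Σ_l α_l >= 1]. *)

(** [bigO0 f g] unfolds to [exists C, near0 (fun h => Rabs (f h) <= C * Rabs (g h))],
    which the proofs below use without folding. *)
Definition near0 (P : R -> Prop) : Prop :=
  exists delta, 0 < delta /\ forall h, 0 < h < delta -> P h.

Lemma near0_always (P : R -> Prop) : (forall h, 0 < h -> P h) -> near0 P.
Proof. intros HP. exists 1. split; [lra|]. intros h Hh. apply HP; lra. Qed.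

Lemma near0_lt (c : R) : 0 < c -> near0 (fun h => h < c).
Proof. intros Hc. exists c. split; [exact Hc|]. intros h Hh; apply Hh. Qed.

Lemma near0_impl (P Q : R -> Prop) :
  near0 P -> (forall h, 0 < h -> P h -> Q h) -> near0 Q.
Proof.
  intros [delta [Hdelta HP]] HPQ. exists delta. split; [exact Hdelta|].
  intros h Hh. apply HPQ; [lra | now apply HP].
Qed.

Lemma near0_and (P Q : R -> Prop) :
  near0 P -> near0 Q -> near0 (fun h => P h /\ Q h).
Proof.
  intros [d1 [Hd1 HP]] [d2 [Hd2 HQ]]. exists (Rmin d1 d2).
  split; [now apply Rmin_pos|].
  intros h Hh. generalize (Rmin_l d1 d2) (Rmin_r d1 d2). intros.
  split; [apply HP | apply HQ]; lra.
Qed.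

Lemma near0_forall_lt (n : nat) (P : nat -> R -> Prop) :
  (forall l, (l < n)%nat -> near0 (P l)) ->
  near0 (fun h => forall l, (l < n)%nat -> P l h).
Proof.
  induction n as [|n IH]; intros HP.
  - apply near0_always. intros; lia.
  - apply (near0_impl (fun h => (forall l, (l < n)%nat -> P l h) /\ P n h)).
    + apply near0_and; [apply IH; intros; apply HP|apply HP]; lia.
    + intros h _ [Hlt Hn] l Hl.
      destruct (Nat.eq_dec l n) as [->|]; [exact Hn | apply Hlt; lia].
Qed.

Lemma near0_exists (P : R -> Prop) : near0 P -> exists h, 0 < h /\ P h.
Proof. intros [delta [Hdelta HP]]. exists (delta / 2). split; [lra | apply HP; lra]. Qed.

Lemma near0_mul_le (K eps : R) : 0 < eps -> near0 (fun h => K * h <= eps).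
Proof.
  intros Heps. pose proof (Rabs_pos K) as HK.
  exists (eps / (Rabs K + 1)). split; [apply Rdiv_lt_0_compat; lra|].
  intros h [Hh Hhd].
  assert ((Rabs K + 1) * h < eps).
  { replace eps with ((Rabs K + 1) * (eps / (Rabs K + 1))) by (field; lra).
    apply Rmult_lt_compat_l; lra. }
  pose proof (Rle_abs K). nra.
Qed.

Lemma bigO0_ext (f f' g : R -> R) :
  near0 (fun h => f h = f' h) -> bigO0 f g -> bigO0 f' g.
Proof.
  intros Heq [C HC]. exists C.
  apply (near0_impl _ _ (near0_and _ _ Heq HC)). intros h _ [-> Hh]. exact Hh.
Qed.

Lemma bigO0_ext_r (f g g' : R -> R) :
  (forall h, 0 < h -> g h = g' h) -> bigO0 f g -> bigO0 f g'.
Proof.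
  intros Heq [C HC]. exists C. apply (near0_impl _ _ HC). intros h Hh.
  now rewrite Heq.
Qed.

Lemma bigO0_add (f1 f2 g : R -> R) :
  bigO0 f1 g -> bigO0 f2 g -> bigO0 (fun h => f1 h + f2 h) g.
Proof.
  intros [C1 HC1] [C2 HC2]. exists (C1 + C2).
  apply (near0_impl _ _ (near0_and _ _ HC1 HC2)). intros h _ [H1 H2].
  pose proof (Rabs_triang (f1 h) (f2 h)). lra.
Qed.

Lemma bigO0_opp (f g : R -> R) : bigO0 f g -> bigO0 (fun h => - f h) g.
Proof.
  intros [C HC]. exists C. apply (near0_impl _ _ HC). intros h _.
  now rewrite Rabs_Ropp.
Qed.

Lemma bigO0_scal (c : R) (f g : R -> R) : bigO0 f g -> bigO0 (fun h => c * f h) g.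
Proof.
  intros [C HC]. exists (Rabs c * C). apply (near0_impl _ _ HC). intros h _ Hh.
  rewrite Rabs_mult, Rmult_assoc. apply Rmult_le_compat_l; [apply Rabs_pos | exact Hh].
Qed.

Lemma bigO0_abs (f g : R -> R) : bigO0 f g -> bigO0 (fun h => Rabs (f h)) g.
Proof.
  intros [C HC]. exists C. apply (near0_impl _ _ HC). intros h _.
  now rewrite Rabs_Rabsolu.
Qed.

Lemma pow_le_pow_le_1 (h : R) (i j : nat) :
  0 <= h <= 1 -> (i <= j)%nat -> h ^ j <= h ^ i.
Proof.
  intros Hh Hij. replace j with (i + (j - i))%nat by lia. rewrite pow_add.
  assert (h ^ (j - i) <= 1) by (rewrite <- (pow1 (j - i)); now apply pow_incr).
  pose proof (pow_le h i ltac:(lra)). pose proof (pow_le h (j - i) ltac:(lra)). nra.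
Qed.

Lemma bigO0_pow_le (f : R -> R) (i j : nat) :
  (i <= j)%nat -> bigO0 f (fun h => h ^ j) -> bigO0 f (fun h => h ^ i).
Proof.
  intros Hij [C HC]. exists (Rabs C).
  apply (near0_impl _ _ (near0_and _ _ HC (near0_lt 1 Rlt_0_1))).
  intros h Hh [HCh Hh1]. cbv beta in *.
  pose proof (pow_le_pow_le_1 h i j ltac:(lra) Hij).
  pose proof (pow_le h j ltac:(lra)). pose proof (Rle_abs C). pose proof (Rabs_pos C).
  rewrite (Rabs_pos_eq (h ^ j)) in HCh by lra.
  rewrite (Rabs_pos_eq (h ^ i)) by (apply pow_le; lra). nra.
Qed.

Lemma bigO0_monomial (c : R) (i j : nat) :
  (i <= j)%nat -> bigO0 (fun h => c * h ^ j) (fun h => h ^ i).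
Proof.
  intros Hij. apply (bigO0_pow_le _ i j Hij). exists (Rabs c).
  apply near0_always. intros h _. rewrite Rabs_mult. lra.
Qed.

Lemma bigO0_of_le_mul (F U E g1 g2 : R -> R) :
  near0 (fun h => Rabs (F h) <= U h * E h) -> bigO0 U g1 -> bigO0 E g2 ->
  bigO0 F (fun h => g1 h * g2 h).
Proof.
  intros HF [C1 HC1] [C2 HC2]. exists (C1 * C2).
  apply (near0_impl _ _ (near0_and _ _ HF (near0_and _ _ HC1 HC2))).
  intros h _ [HFh [H1 H2]].
  assert (U h * E h <= Rabs (U h) * Rabs (E h)) by (rewrite <- Rabs_mult; apply Rle_abs).
  assert (Rabs (U h) * Rabs (E h) <= C1 * Rabs (g1 h) * (C2 * Rabs (g2 h)))
    by (apply Rmult_le_compat; auto using Rabs_pos).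
  rewrite Rabs_mult. lra.
Qed.

Lemma bigO0_uniform (n : nat) (f : nat -> R -> R) (g : R -> R) :
  (forall l, (l < n)%nat -> bigO0 (f l) g) ->
  exists C, near0 (fun h => forall l, (l < n)%nat -> Rabs (f l h) <= C * Rabs (g h)).
Proof.
  induction n as [|n IH]; intros Hf.
  - exists 0. apply near0_always. intros; lia.
  - destruct IH as [C1 HC1]; [intros; apply Hf; lia|].
    destruct (Hf n ltac:(lia)) as [C2 HC2].
    exists (Rmax C1 C2). apply (near0_impl _ _ (near0_and _ _ HC1 HC2)).
    intros h _ [H1 H2] l Hl.
    pose proof (Rmax_l C1 C2). pose proof (Rmax_r C1 C2). pose proof (Rabs_pos (g h)).
    destruct (Nat.eq_dec l n) as [->|]; [|specialize (H1 l ltac:(lia))]; nra.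
Qed.

Lemma bigO0_poly_tail (a : nat -> R) (n N : nat) :
  bigO0 (fun h => sum_f n N (fun l => a l * h ^ l) - a n * h ^ n) (fun h => h ^ S n).
Proof.
  unfold sum_f. induction (N - n)%nat as [|K IH].
  - exists 0. apply near0_always. intros h _. cbn. rewrite Rminus_diag, Rabs_R0. lra.
  - apply (bigO0_ext (fun h => (sum_f_R0 (fun x => a (x + n)%nat * h ^ (x + n)) K
                                - a n * h ^ n) + a (S K + n)%nat * h ^ (S K + n))).
    + apply near0_always. intros h _. cbn [sum_f_R0]. ring.
    + apply bigO0_add; [exact IH | apply bigO0_monomial; lia].
Qed.

Lemma bigO0_leading_term (f : R -> R) (a : nat -> R) (b : R) (n1 n2 : nat) :
  (n1 < n2)%nat ->
  bigO0 (fun h => f h - sum_f n1 (n2 - 1) (fun l => a l * h ^ l) - b * h ^ n2)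
        (fun h => h ^ (n2 + 1)) ->
  bigO0 (fun h => f h - a n1 * h ^ n1) (fun h => h ^ S n1).
Proof.
  intros Hn12 Hf.
  set (P := fun h => sum_f n1 (n2 - 1) (fun l => a l * h ^ l)).
  apply (bigO0_ext (fun h => (f h - P h - b * h ^ n2) + b * h ^ n2
                             + (P h - a n1 * h ^ n1))).
  { apply near0_always. intros h _. ring. }
  apply bigO0_add; [apply bigO0_add|].
  - apply (bigO0_pow_le _ _ (n2 + 1)); [lia | exact Hf].
  - apply bigO0_monomial; lia.
  - apply bigO0_poly_tail.
Qed.

Lemma bigO0_sub_expansions (f1 f2 P : R -> R) (b1 b2 : R) (n : nat) :
  bigO0 (fun h => f1 h - P h - b1 * h ^ n) (fun h => h ^ (n + 1)) ->
  bigO0 (fun h => f2 h - P h - b2 * h ^ n) (fun h => h ^ (n + 1)) ->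
  bigO0 (fun h => f1 h - f2 h) (fun h => h ^ n).
Proof.
  intros H1 H2.
  apply (bigO0_ext (fun h => (f1 h - P h - b1 * h ^ n) + - (f2 h - P h - b2 * h ^ n)
                             + (b1 - b2) * h ^ n)).
  { apply near0_always. intros h _. ring. }
  apply bigO0_add; [apply bigO0_add|].
  - apply (bigO0_pow_le _ _ (n + 1)); [lia | exact H1].
  - apply bigO0_opp, (bigO0_pow_le _ _ (n + 1)); [lia | exact H2].
  - apply bigO0_monomial; lia.
Qed.

Lemma leading_coef_pos_lower_bound (f : R -> R) (a : R) (n : nat) :
  a <> 0 -> near0 (fun h => 0 < f h) ->
  bigO0 (fun h => f h - a * h ^ n) (fun h => h ^ S n) ->
  0 < a /\ near0 (fun h => a / 2 * h ^ n <= f h).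
Proof.
  intros Ha Hpos [Q HQ].
  assert (Hclose : near0 (fun h => Rabs (f h - a * h ^ n) <= Rabs a / 2 * h ^ n)).
  { apply (near0_impl _ _ (near0_and _ _ HQ
             (near0_mul_le (Rabs Q) (Rabs a / 2) ltac:(pose proof (Rabs_pos_lt a Ha); lra)))).
    intros h Hh [HQh Hsmall]. cbv beta in *.
    rewrite (Rabs_pos_eq (h ^ S n)) in HQh by (apply pow_le; lra). simpl in HQh.
    pose proof (pow_le h n ltac:(lra)).
    assert (Q * (h * h ^ n) <= Rabs Q * (h * h ^ n))
      by (apply Rmult_le_compat_r; [apply Rmult_le_pos; lra | exact (Rle_abs Q)]).
    assert (Rabs Q * h * h ^ n <= Rabs a / 2 * h ^ n) by (apply Rmult_le_compat_r; lra).
    lra. }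
  assert (Hbetween : forall z B, Rabs z <= B -> - B <= z <= B).
  { intros z B Hz. pose proof (Rle_abs z). pose proof (Rle_abs (- z)).
    rewrite Rabs_Ropp in *. lra. }
  assert (Ha_pos : 0 < a).
  { destruct (near0_exists _ (near0_and _ _ Hpos Hclose)) as [h [Hh [Hfh Hh']]].
    apply Hbetween in Hh'. pose proof (pow_lt h n Hh).
    destruct (Rle_lt_dec a 0) as [Hle|]; [|lra].
    rewrite Rabs_left in Hh' by lra. nra. }
  split; [exact Ha_pos|].
  apply (near0_impl _ _ Hclose). intros h Hh Hh'.
  apply Hbetween in Hh'. rewrite Rabs_pos_eq in Hh' by lra. lra.
Qed.

Lemma common_expansion_lower_bound (r : nat) (beta : nat -> R -> R) (a b : nat -> R)
    (n1 n2 : nat) :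
  (0 < r)%nat -> (n1 < n2)%nat -> a n1 <> 0 ->
  near0 (fun h => forall l, (l < r)%nat -> 0 < beta l h) ->
  (forall l, (l < r)%nat ->
     bigO0 (fun h => beta l h - sum_f n1 (n2 - 1) (fun i => a i * h ^ i) - b l * h ^ n2)
           (fun h => h ^ (n2 + 1))) ->
  0 < a n1 /\ near0 (fun h => forall l, (l < r)%nat -> a n1 / 2 * h ^ n1 <= beta l h).
Proof.
  intros Hr Hn12 Ha Hpos Hbeta.
  assert (Hlead : forall l, (l < r)%nat ->
            0 < a n1 /\ near0 (fun h => a n1 / 2 * h ^ n1 <= beta l h)).
  { intros l Hl. apply leading_coef_pos_lower_bound; [exact Ha | |].
    - apply (near0_impl _ _ Hpos). auto.
    - exact (bigO0_leading_term _ a (b l) n1 n2 Hn12 (Hbeta l Hl)). }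
  split; [exact (proj1 (Hlead 0%nat Hr))|].
  apply near0_forall_lt. intros l Hl. apply Hlead, Hl.
Qed.

Lemma bigO0_div_pow (f g : R -> R) (c : R) (m n : nat) :
  0 < c -> (n <= m)%nat -> near0 (fun h => c * h ^ n <= g h) ->
  bigO0 f (fun h => h ^ m) -> bigO0 (fun h => f h / g h) (fun h => h ^ (m - n)).
Proof.
  intros Hc Hnm Hg [M HM]. exists (Rabs M / c).
  apply (near0_impl _ _ (near0_and _ _ Hg HM)). intros h Hh [Hgh HMh]. cbv beta in *.
  pose proof (pow_lt h n Hh). pose proof (pow_lt h (m - n) Hh).
  assert (Hg0 : 0 < g h) by nra.
  assert (Hm : h ^ m = h ^ (m - n) * h ^ n) by (rewrite <- pow_add; f_equal; lia).
  rewrite (Rabs_pos_eq (h ^ m)) in HMh by (apply pow_le; lra).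
  rewrite (Rabs_pos_eq (h ^ (m - n))) by lra.
  unfold Rdiv. rewrite Rabs_mult, Rabs_inv, (Rabs_pos_eq (g h)) by lra.
  apply (Rmult_le_reg_r (g h)); [exact Hg0|].
  rewrite Rmult_assoc, Rinv_l, Rmult_1_r by lra.
  set (X := Rabs M * / c * h ^ (m - n)).
  assert (HX : X * (c * h ^ n) = Rabs M * h ^ m) by (unfold X; rewrite Hm; field; lra).
  assert (0 <= X).
  { apply Rmult_le_pos; [|lra].
    apply Rmult_le_pos; [apply Rabs_pos | left; apply Rinv_0_lt_compat; lra]. }
  assert (M * h ^ m <= Rabs M * h ^ m)
    by (apply Rmult_le_compat_r; [apply pow_le; lra | apply Rle_abs]).
  assert (X * (c * h ^ n) <= X * g h) by (apply Rmult_le_compat_l; lra).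
  lra.
Qed.

Lemma Rpower_pos (x y : R) : 0 < Rpower x y.
Proof. apply exp_pos. Qed.

Lemma rpow_pos_eq (x p : R) : 0 < x -> rpow x p = Rpower x p.
Proof. intros Hx. unfold rpow. destruct (Rle_dec x 0); [lra | reflexivity]. Qed.

Lemma rpow_0_l (p : R) : rpow 0 p = 0.
Proof. unfold rpow. destruct (Rle_dec 0 0); [reflexivity | lra]. Qed.

Lemma rpow_nonneg (x p : R) : 0 <= rpow x p.
Proof. unfold rpow. destruct (Rle_dec x 0); [lra | left; apply Rpower_pos]. Qed.

Lemma rpow_le_compat (x y p : R) : 0 < p -> 0 <= x <= y -> rpow x p <= rpow y p.
Proof.
  intros Hp [[Hx|<-] Hxy]; [|rewrite rpow_0_l; apply rpow_nonneg].
  rewrite !rpow_pos_eq by lra. apply Rle_Rpower_l; lra.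
Qed.

Lemma rpow_mult (x y p : R) : 0 <= x -> 0 < y -> rpow (x * y) p = rpow x p * rpow y p.
Proof.
  intros [Hx|<-] Hy; [|rewrite Rmult_0_l, !rpow_0_l; ring].
  rewrite !rpow_pos_eq by (try apply Rmult_lt_0_compat; lra).
  now rewrite Rpower_mult_distr.
Qed.

Lemma rpow_pow (h p : R) (j : nat) : 0 < h -> rpow (h ^ j) p = Rpower h (p * INR j).
Proof.
  intros Hh. rewrite rpow_pos_eq by (now apply pow_lt).
  rewrite <- Rpower_pow, Rpower_mult, Rmult_comm by exact Hh. reflexivity.
Qed.

Lemma bigO0_rpow (f : R -> R) (p : R) (j : nat) :
  0 < p -> near0 (fun h => 0 <= f h) -> bigO0 f (fun h => h ^ j) ->
  bigO0 (fun h => rpow (f h) p) (fun h => Rpower h (p * INR j)).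
Proof.
  intros Hp Hf [M HM]. exists (rpow (Rabs M) p).
  apply (near0_impl _ _ (near0_and _ _ Hf HM)). intros h Hh [Hf0 HMh]. cbv beta in *.
  pose proof (pow_le h j ltac:(lra)).
  rewrite Rabs_pos_eq in HMh by exact Hf0.
  rewrite (Rabs_pos_eq (h ^ j)) in HMh by assumption.
  rewrite (Rabs_pos_eq (rpow _ _)) by apply rpow_nonneg.
  rewrite (Rabs_pos_eq (Rpower _ _)) by (left; apply Rpower_pos).
  rewrite <- rpow_pow, <- rpow_mult by (try apply pow_lt; auto using Rabs_pos).
  apply rpow_le_compat; [exact Hp|]. split; [exact Hf0|].
  assert (M * h ^ j <= Rabs M * h ^ j) by (apply Rmult_le_compat_r; [assumption | apply Rle_abs]).
  lra.
Qed.

Lemma ln_le_sub_1 (x : R) : 0 < x -> ln x <= x - 1.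
Proof. intros Hx. pose proof (exp_ineq1_le (ln x)). rewrite exp_ln in *; lra. Qed.

Lemma Rpower_sub_le (x y p : R) :
  0 < p -> 0 < y <= x -> Rpower x p - Rpower y p <= p * Rpower x p * (x / y - 1).
Proof.
  intros Hp [Hy Hyx].
  assert (Hsplit : Rpower y p = Rpower x p * Rpower (y / x) p).
  { rewrite Rpower_mult_distr by (try apply Rdiv_lt_0_compat; lra). f_equal. field. lra. }
  assert (Hln : 1 - x / y <= ln (y / x)).
  { replace (y / x) with (/ (x / y)) by (field; lra).
    rewrite ln_Rinv by (apply Rdiv_lt_0_compat; lra).
    pose proof (ln_le_sub_1 (x / y) ltac:(apply Rdiv_lt_0_compat; lra)). lra. }
  assert (Hratio : 1 - p * (x / y - 1) <= Rpower (y / x) p).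
  { unfold Rpower. pose proof (exp_ineq1_le (p * ln (y / x))).
    assert (p * (1 - x / y) <= p * ln (y / x)) by (apply Rmult_le_compat_l; lra).
    lra. }
  rewrite Hsplit. pose proof (Rpower_pos x p). nra.
Qed.

Lemma Rpower_dist_le (x y p : R) : 0 < p -> 0 < x -> 0 < y ->
  Rabs (Rpower x p - Rpower y p)
  <= p * (Rpower x p + Rpower y p) * (Rabs (x / y - 1) + Rabs (y / x - 1)).
Proof.
  assert (Hle : forall u v, 0 < p -> 0 < v <= u ->
    Rabs (Rpower u p - Rpower v p)
    <= p * (Rpower u p + Rpower v p) * (Rabs (u / v - 1) + Rabs (v / u - 1))).
  { intros u v Hp Hvu. pose proof (Rpower_pos u p). pose proof (Rpower_pos v p).
    rewrite Rabs_pos_eq by (pose proof (Rle_Rpower_l v u p ltac:(lra) Hvu); lra).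
    eapply Rle_trans; [now apply Rpower_sub_le|].
    assert (1 <= u / v) by (apply (Rmult_le_reg_r v); [lra|]; field_simplify; lra).
    pose proof (Rle_abs (u / v - 1)). pose proof (Rabs_pos (v / u - 1)).
    apply Rmult_le_compat; [nra | lra | nra | lra]. }
  intros Hp Hx Hy. destruct (Rle_dec y x) as [Hyx|Hxy]; [apply Hle; lra|].
  rewrite Rabs_minus_sym, (Rplus_comm (Rpower x p)), (Rplus_comm (Rabs (x / y - 1))).
  apply Hle; lra.
Qed.

Lemma bigO0_rpow_div (tau b : R -> R) (p c : R) (n m : nat) :
  0 < p -> 0 < c -> (n <= m)%nat ->
  near0 (fun h => 0 <= tau h) -> near0 (fun h => c * h ^ n <= b h) ->
  bigO0 tau (fun h => h ^ m) ->
  bigO0 (fun h => rpow (tau h / b h) p) (fun h => Rpower h (p * INR (m - n))).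
Proof.
  intros Hp Hc Hnm Htau0 Hb Htau.
  apply bigO0_rpow; [exact Hp | | exact (bigO0_div_pow _ _ c m n Hc Hnm Hb Htau)].
  apply (near0_impl _ _ (near0_and _ _ Htau0 Hb)). intros h Hh [Ht Hbh].
  pose proof (pow_lt h n Hh). apply Rmult_le_pos; [lra|].
  left. apply Rinv_0_lt_compat. nra.
Qed.

Lemma bigO0_ratio_sub_1 (b1 b2 : R -> R) (c : R) (n1 n2 : nat) :
  0 < c -> (n1 <= n2)%nat -> near0 (fun h => c * h ^ n1 <= b2 h) ->
  bigO0 (fun h => b1 h - b2 h) (fun h => h ^ n2) ->
  bigO0 (fun h => b1 h / b2 h - 1) (fun h => h ^ (n2 - n1)).
Proof.
  intros Hc Hn12 Hb2 H12.
  apply (bigO0_ext (fun h => (b1 h - b2 h) / b2 h)).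
  - apply (near0_impl _ _ Hb2). intros h Hh Hbh. pose proof (pow_lt h n1 Hh).
    field. nra.
  - exact (bigO0_div_pow _ _ c n2 n1 Hc Hn12 Hb2 H12).
Qed.

Lemma bigO0_rpow_ratio_sub (tau bk bl : R -> R) (p c : R) (n1 n2 m : nat) :
  0 < p -> 0 < c -> (n1 <= n2)%nat -> (n1 <= m)%nat ->
  near0 (fun h => 0 <= tau h) ->
  near0 (fun h => c * h ^ n1 <= bk h) -> near0 (fun h => c * h ^ n1 <= bl h) ->
  bigO0 tau (fun h => h ^ m) ->
  bigO0 (fun h => bk h - bl h) (fun h => h ^ n2) ->
  bigO0 (fun h => rpow (tau h / bk h) p - rpow (tau h / bl h) p)
        (fun h => Rpower h (p * INR (m - n1) + INR (n2 - n1))).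
Proof.
  intros Hp Hc Hn12 Hn1m Htau0 Hk Hl Htau Hdiff.
  assert (Hdiff' : bigO0 (fun h => bl h - bk h) (fun h => h ^ n2)).
  { apply (bigO0_ext (fun h => - (bk h - bl h))); [apply near0_always; intros; ring|].
    now apply bigO0_opp. }
  apply (bigO0_ext_r _ (fun h => Rpower h (p * INR (m - n1)) * h ^ (n2 - n1))).
  { intros h Hh. now rewrite Rpower_plus, Rpower_pow. }
  apply (bigO0_of_le_mul _
           (fun h => p * (rpow (tau h / bk h) p + rpow (tau h / bl h) p))
           (fun h => Rabs (bl h / bk h - 1) + Rabs (bk h / bl h - 1))).
  - apply (near0_impl _ _ (near0_and _ _ Htau0 (near0_and _ _ Hk Hl))).
    intros h Hh (Ht & Hbk & Hbl). pose proof (pow_lt h n1 Hh).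
    destruct Ht as [Ht|Ht].
    + rewrite !rpow_pos_eq by (apply Rdiv_lt_0_compat; nra).
      replace (bl h / bk h) with (tau h / bk h / (tau h / bl h)) by (field; nra).
      replace (bk h / bl h) with (tau h / bl h / (tau h / bk h)) by (field; nra).
      apply Rpower_dist_le; [exact Hp | apply Rdiv_lt_0_compat; nra ..].
    + rewrite <- Ht, !Rdiv_0_l, rpow_0_l, Rminus_diag, Rabs_R0, Rplus_0_r, Rmult_0_r.
      lra.
  - apply bigO0_scal, bigO0_add; eapply bigO0_rpow_div; eassumption.
  - apply bigO0_add; apply bigO0_abs; eapply bigO0_ratio_sub_1; eassumption.
Qed.

Lemma normalized_weight_deviation (N : nat) (d y : nat -> R) (Ca B : R) (k : nat) :
  (forall l, (l <= N)%nat -> 0 <= d l) -> sum_f_R0 d N = 1 -> d k <> 0 -> 0 <= Ca ->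
  (forall l, (l <= N)%nat -> 0 <= y l /\ Rabs (y k - y l) <= B) ->
  Rabs (d k * (1 + Ca * y k) / sum_f_R0 (fun l => d l * (1 + Ca * y l)) N / d k - 1)
  <= Ca * B.
Proof.
  intros Hd Hsum Hdk HCa Hy.
  set (S := sum_f_R0 (fun l => d l * (1 + Ca * y l)) N).
  set (D := sum_f_R0 (fun l => d l * (y k - y l)) N).
  assert (HS : S = 1 + Ca * sum_f_R0 (fun l => d l * y l) N).
  { rewrite <- Hsum, scal_sum, <- plus_sum. apply sum_eq. intros; ring. }
  assert (HD : D = y k - sum_f_R0 (fun l => d l * y l) N).
  { rewrite <- (Rmult_1_r (y k)), <- Hsum, scal_sum, <- minus_sum.
    apply sum_eq. intros; ring. }
  assert (HS1 : 1 <= S).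
  { assert (0 <= sum_f_R0 (fun l => d l * y l) N).
    { rewrite <- (sum_eq_R0 (fun _ => 0) N) by reflexivity. apply sum_Rle.
      intros l Hl. apply Rmult_le_pos; [apply Hd | apply Hy]; exact Hl. }
    rewrite HS. nra. }
  assert (HDB : Rabs D <= B).
  { eapply Rle_trans; [apply sum_f_R0_triangle|].
    rewrite <- (Rmult_1_r B), <- Hsum, scal_sum. apply sum_Rle. intros l Hl.
    rewrite Rabs_mult, Rabs_pos_eq by (now apply Hd).
    apply Rmult_le_compat_l; [now apply Hd | now apply Hy]. }
  replace (d k * (1 + Ca * y k) / S / d k - 1) with (Ca * D / S)
    by (rewrite HD, HS; field; split; [rewrite <- HS; lra | exact Hdk]).
  unfold Rdiv. rewrite !Rabs_mult, Rabs_inv, (Rabs_pos_eq Ca), (Rabs_pos_eq S) by lra.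
  assert (/ S <= 1) by (rewrite <- Rinv_1; apply Rinv_le_contravar; lra).
  assert (0 <= Ca * Rabs D) by (apply Rmult_le_pos; [lra | apply Rabs_pos]).
  assert (Ca * Rabs D * / S <= Ca * Rabs D * 1) by (apply Rmult_le_compat_l; lra).
  assert (Ca * Rabs D <= Ca * B) by (apply Rmult_le_compat_l; lra).
  lra.
Qed.

Theorem lemma3p1
  (r : nat) (d : nat -> R) (p Ca : R) (n1 n2 m : nat)
  (tau : R -> R) (beta : nat -> R -> R) (a b : nat -> R) :
  (2 <= r)%nat ->
  (forall k, (k < r)%nat -> 0 < d k) ->
  sum_lt r d = 1 ->
  0 < p -> 0 < Ca ->
  (1 <= n1)%nat -> (n1 < n2)%nat -> (n1 < m)%nat ->
  (* tau >= 0 and beta_k > 0 for all sufficiently small Delta x > 0 *)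
  (exists delta0, 0 < delta0 /\ forall h, 0 < h < delta0 ->
      0 <= tau h /\ forall k, (k < r)%nat -> 0 < beta k h) ->
  bigO0 tau (fun h => h ^ m) ->
  a n1 <> 0 ->
  (forall k, (k < r)%nat ->
     bigO0 (fun h => beta k h
                     - sum_f n1 (n2 - 1) (fun l => a l * h ^ l)
                     - b k * h ^ n2)
           (fun h => h ^ (n2 + 1))) ->
  forall k, (k < r)%nat ->
    exists e : R -> R,
      bigO0 e (fun h => Rpower h (p * INR (m - n1) + INR (n2 - n1))) /\
      (exists delta1, 0 < delta1 /\ forall h, 0 < h < delta1 ->
         omegaZ r d Ca p tau beta k h = d k * (1 + e h)).
Proof.
  intros Hr Hd Hsum Hp HCa _ Hn12 Hm Hpos Htau Ha Hbeta k Hk.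
  destruct (common_expansion_lower_bound r beta a b n1 n2 ltac:(lia) Hn12 Ha) as [Ha_pos Hlow];
    [apply (near0_impl _ _ Hpos); tauto | exact Hbeta |].
  assert (Hdiff : forall l, (l < r)%nat ->
    bigO0 (fun h => rpow (tau h / beta k h) p - rpow (tau h / beta l h) p)
          (fun h => Rpower h (p * INR (m - n1) + INR (n2 - n1)))).
  { intros l Hl.
    apply (bigO0_rpow_ratio_sub _ _ _ p (a n1 / 2)); try lia; try lra.
    - apply (near0_impl _ _ Hpos). now intros h _ [Ht _].
    - apply (near0_impl _ _ Hlow). auto.
    - apply (near0_impl _ _ Hlow). auto.
    - exact Htau.
    - exact (bigO0_sub_expansions _ _ _ _ _ _ (Hbeta k Hk) (Hbeta l Hl)). }
  destruct (bigO0_uniform r _ _ Hdiff) as [B HB].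
  pose proof (Hd k Hk) as Hdk.
  exists (fun h => omegaZ r d Ca p tau beta k h / d k - 1). split.
  - exists (Ca * B). apply (near0_impl _ _ HB). intros h _ HBh.
    rewrite Rmult_assoc. unfold omegaZ, alphaZ, sum_lt.
    apply (normalized_weight_deviation (r - 1) d (fun l => rpow (tau h / beta l h) p));
      try lra.
    + intros l Hl. left. apply Hd. lia.
    + exact Hsum.
    + intros l Hl. split; [apply rpow_nonneg | apply HBh]. lia.
  - exists 1. split; [lra|]. intros h _. field. lra.
Qed.
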